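(* Let $G=(V,E)$ be a simple undirected graph with $V=[n]$ and let $k\ge1$ be an integer such that $\alpha_k(G)=k\,\vartheta(G)$. Then $$\vartheta_k(G)=\vartheta'_k(G)=\theta^1_k(G)=\theta^2_k(G)=\theta^3_k(G)=k\,\alpha(G)=\alpha_k(G).$$
   Context: $\alpha(G)$ is the stability number; $\alpha_k(G)$ is the maximum number of vertices of an induced $k$-colorable subgraph of $G$. $J$ is the all-ones matrix, $\langle A,B\rangle=\mathrm{trace}(AB)$, $\ge0$ entrywise, $\succeq0$ positive semidefinite, $\mathbb S^m$ symmetric $m\times m$ matrices. $\vartheta(G)=\max\{\langle J,Z\rangle: Z\in\mathbb S^n,\ Z_{ij}=0\ (\{i,j\}\in E),\ \langle I,Z\rangle=1,\ Z\succeq 0\}$ (Lovász number). $\vartheta_k(G)=\max\{\langle J,Z\rangle: Z\in\mathbb S^n,\ Z_{ij}=0\ (\{i,j\}\in E),\ \langle I,Z\rangle=k,\ Z\succeq0,\ I-Z\succeq0\}$, and $\vartheta'_k(G)$ is the same with the additional constraint $Z\ge0$. $\theta^1_k(G)=\max\langle I,Z\rangle$ over $Z,X\in\mathbb S^n$ subject to $Z_{ij}=0$ for $\{i,j\}\in E$; $X_{ii}=0$ for $i\in[n]$; $Z,X\ge0$; $Z-X\succeq0$; $\begin{bmatrix}1&\mathrm{diag}(Z)^{\top}\\ \mathrm{diag}(Z)&Z+(k-1)X\end{bmatrix}\succeq0$; $1-Z_{ii}-Z_{jj}+Z_{ij}+(k-1)X_{ij}\ge0$ for $i>j$; $Z_{ii}-Z_{ij}-(k-1)X_{ij}\ge0$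 for $i\ne j$. $\theta^2_k(G)$ is the optimal value of the same problem without the last two families of linear inequalities. $\theta^3_k(G)=\max\{\langle I,Z\rangle: Z\in\mathbb S^n,\ Z_{ij}=0\ (\{i,j\}\in E),\ Z_{ii}\le1,\ Z\ge0,\ \begin{bmatrix}k&\mathrm{diag}(Z)^{\top}\\ \mathrm{diag}(Z)&Z\end{bmatrix}\succeq0\}$. *)

From HB Require Import structures.
From mathcomp Require Import all_boot all_order all_algebra.
From mathcomp Require Import boolp classical_sets reals.
Set Implicit Arguments. Unset Strict Implicit. Unset Printing Implicit Defensive.
Import Order.TTheory GRing.Theory Num.Theory.
Local Open Scope ring_scope.
Local Open Scope classical_set_scope.

Definition simple_graph (n : nat) (E : rel 'I_n) :=
  symmetric E /\ irreflexive E.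

Definition stable (n : nat) (E : rel 'I_n) (S : {set 'I_n}) : bool :=
  [forall i in S, forall j in S, ~~ E i j].

Definition k_colorable_set (n k : nat) (E : rel 'I_n) (S : {set 'I_n}) : Prop :=
  exists c : 'I_n -> 'I_k,
    forall i j, i \in S -> j \in S -> E i j -> c i != c j.

Definition alpha (n : nat) (E : rel 'I_n) : nat :=
  \max_(S : {set 'I_n} | stable E S) #|S|.

Definition alpha_k (n k : nat) (E : rel 'I_n) : nat :=
  \max_(S : {set 'I_n} | `[< k_colorable_set k E S >]) #|S|.

Section SDP.
Variable R : realType.

Definition symm (m : nat) (A : 'M[R]_m) : Prop := A^T = A.

Definition psd (m : nat) (A : 'M[R]_m) : Prop :=
  symm A /\ forall x : 'cV[R]_m, 0 <= (x^T *m A *m x) 0 0.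

Definition nonneg_mx (m : nat) (A : 'M[R]_m) : Prop := forall i j, 0 <= A i j.

(* <J, Z> = sum of all entries; <I, Z> = trace *)
Definition innerJ (m : nat) (A : 'M[R]_m) : R := \sum_i \sum_j A i j.

Definition diagv (m : nat) (A : 'M[R]_m) : 'cV[R]_m := \col_i A i i.

Definition arrow_mx (m : nat) (a : R) (Z B : 'M[R]_m) : 'M[R]_(1 + m) :=
  block_mx (a%:M : 'M[R]_1) (diagv Z)^T (diagv Z) B.

Definition zero_on_edges (n : nat) (E : rel 'I_n) (Z : 'M[R]_n) : Prop :=
  forall i j, E i j -> Z i j = 0.

Definition theta (n : nat) (E : rel 'I_n) : R :=
  sup [set innerJ Z | Z in [set Z : 'M[R]_n |
        [/\ symm Z, zero_on_edges E Z, \tr Z = 1 & psd Z]]].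

Definition theta_k (n k : nat) (E : rel 'I_n) : R :=
  sup [set innerJ Z | Z in [set Z : 'M[R]_n |
        [/\ symm Z, zero_on_edges E Z, \tr Z = k%:R, psd Z & psd (1%:M - Z)]]].

Definition theta'_k (n k : nat) (E : rel 'I_n) : R :=
  sup [set innerJ Z | Z in [set Z : 'M[R]_n |
        [/\ symm Z, zero_on_edges E Z, \tr Z = k%:R, psd Z /\ psd (1%:M - Z)
          & nonneg_mx Z]]].

Definition feas2 (n k : nat) (E : rel 'I_n) (Z X : 'M[R]_n) : Prop :=
  [/\ symm Z /\ symm X, zero_on_edges E Z, (forall i, X i i = 0),
      nonneg_mx Z /\ nonneg_mx X & psd (Z - X) /\ psd (arrow_mx 1 Z (Z + (k.-1)%:R *: X))].

Definition lin_ineq (n k : nat) (Z X : 'M[R]_n) : Prop :=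
  (forall i j : 'I_n, (j < i)%N ->
     0 <= 1 - Z i i - Z j j + Z i j + (k.-1)%:R * X i j) /\
  (forall i j : 'I_n, i != j -> 0 <= Z i i - Z i j - (k.-1)%:R * X i j).

Definition theta1_k (n k : nat) (E : rel 'I_n) : R :=
  sup [set \tr Z | Z in [set Z : 'M[R]_n |
        exists X : 'M[R]_n, feas2 k E Z X /\ lin_ineq k Z X]].

Definition theta2_k (n k : nat) (E : rel 'I_n) : R :=
  sup [set \tr Z | Z in [set Z : 'M[R]_n | exists X : 'M[R]_n, feas2 k E Z X]].

Definition theta3_k (n k : nat) (E : rel 'I_n) : R :=
  sup [set \tr Z | Z in [set Z : 'M[R]_n |
        [/\ symm Z, zero_on_edges E Z, (forall i, Z i i <= 1), nonneg_mx Z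
          & psd (arrow_mx k%:R Z Z)]]].

End SDP.

From HB Require Import structures.
From mathcomp Require Import all_boot all_order all_algebra.
From mathcomp Require Import boolp classical_sets reals.
From mathcomp Require Import ring lra zify.
Import Order.TTheory GRing.Theory Num.Theory.
Set Implicit Arguments. Unset Strict Implicit. Unset Printing Implicit Defensive.
Local Open Scope ring_scope.

(* Write a = alpha(G), t = theta(G) and a_k = alpha_k(G).  Colour classes
   are stable sets, so a_k <= k a, and the normalised all-ones matrix of a
   maximum stable set shows a <= t.  Every relaxation lies between a_k and k t.
   Upper bound: a feasible Z rescaled by 1 / tr Z is feasible for theta, so
   <J, Z> <= tr Z * t; for theta^3_k, whose constraints follow from those of
   theta^1_k and theta^2_k, the arrow constraint also gives
   (tr Z)^2 <= k <J, Z>, hence tr Z <= k t.  Lower bound: for a maximum induced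
   k-colourable subgraph, the 0/1 matrix Z of equally coloured pairs, together
   with X = (differently coloured pairs) / (k - 1), is feasible for theta^1_k
   with trace a_k, and by Cauchy-Schwarz Z / a is feasible for theta'_k with
   <J, Z / a> >= a_k^2 / (k a).  The hypothesis a_k = k t forces a_k = k a,
   and all these bounds meet. *)

Section QuadraticForms.
Variable R : realType.

Lemma sqr_sum_le (I : finType) (P : pred I) (y : I -> R) :
  (\sum_(i | P i) y i) ^+ 2 <= #|P|%:R * \sum_(i | P i) y i ^+ 2.
Proof.
set s := \sum_(i | P i) y i; set T := \sum_(i | P i) y i ^+ 2.
have : 0 <= \sum_(i | P i) \sum_(j | P j) (y i - y j) ^+ 2.
  by do 2![apply: sumr_ge0 => ? _]; exact: sqr_ge0.
have -> : \sum_(i | P i) \sum_(j | P j) (y i - y j) ^+ 2 =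
          \sum_(i | P i) (#|P|%:R * y i ^+ 2 - 2 * s * y i + T).
  apply: eq_bigr => i _.
  rewrite (eq_bigr (fun j => y i ^+ 2 - 2 * y i * y j + y j ^+ 2)) => [|j _]; last by ring.
  by rewrite big_split sumrB /= sumr_const -mulr_sumr -/s -/T -[y i ^+ 2 *+ _]mulr_natl; ring.
rewrite big_split sumrB /= -!mulr_sumr sumr_const -/s -/T -[T *+ _]mulr_natl.
lra.
Qed.

Definition qf (m : nat) (A : 'M[R]_m) (x : 'cV[R]_m) : R := (x^T *m A *m x) 0 0.

Lemma qfD (m : nat) (A B : 'M[R]_m) x : qf (A + B) x = qf A x + qf B x.
Proof. by rewrite /qf mulmxDr mulmxDl mxE. Qed.

Lemma qfB (m : nat) (A B : 'M[R]_m) x : qf (A - B) x = qf A x - qf B x.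
Proof. by rewrite /qf mulmxBr mulmxBl !mxE. Qed.

Lemma qfZ (m : nat) (c : R) (A : 'M[R]_m) x : qf (c *: A) x = c * qf A x.
Proof. by rewrite /qf -scalemxAr -scalemxAl !mxE. Qed.

Lemma qf1 (m : nat) (x : 'cV[R]_m) : qf 1%:M x = \sum_i x i 0 ^+ 2.
Proof. by rewrite /qf mulmx1 mxE; apply: eq_bigr => i _; rewrite mxE expr2. Qed.

Lemma qf_mul_tr (m p : nat) (M : 'M[R]_(m, p)) x :
  qf (M *m M^T) x = \sum_j (\sum_i M i j * x i 0) ^+ 2.
Proof.
rewrite /qf; have -> : x^T *m (M *m M^T) *m x = (M^T *m x)^T *m (M^T *m x).
  by rewrite trmx_mul trmxK !mulmxA.
rewrite mxE; apply: eq_bigr => j _; rewrite !mxE expr2.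
by congr (_ * _); apply: eq_bigr => i _; rewrite !mxE mulrC.
Qed.

Lemma psd_mul_tr (m p : nat) (M : 'M[R]_(m, p)) : psd (M *m M^T).
Proof.
split; first by rewrite /symm trmx_mul trmxK.
by move=> x; rewrite -/(qf _ x) qf_mul_tr; apply: sumr_ge0 => j _; exact: sqr_ge0.
Qed.

Lemma symmZ (m : nat) (a : R) (A : 'M[R]_m) : symm A -> symm (a *: A).
Proof. by move=> sA; rewrite /symm linearZ /= sA. Qed.

Lemma psdZ (m : nat) (c : R) (A : 'M[R]_m) : 0 <= c -> psd A -> psd (c *: A).
Proof.
move=> c_ge0 [sA qA]; split; first exact: symmZ.
by move=> x; rewrite -/(qf _ x) qfZ; apply: mulr_ge0 => //; exact: qA.
Qed.

Lemma innerJ_qf (m : nat) (A : 'M[R]_m) : innerJ A = qf A (const_mx 1).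
Proof.
rewrite /qf mxE /innerJ exchange_big /=; apply: eq_bigr => j _.
by rewrite !mxE mulr1; apply: eq_bigr => i _; rewrite !mxE mul1r.
Qed.

Lemma innerJZ (m : nat) (c : R) (A : 'M[R]_m) : innerJ (c *: A) = c * innerJ A.
Proof.
rewrite /innerJ mulr_sumr; apply: eq_bigr => i _; rewrite mulr_sumr.
by apply: eq_bigr => j _; rewrite mxE.
Qed.

Lemma bilin_delta (m : nat) (A : 'M[R]_m) i j :
  ((delta_mx i 0 : 'cV[R]_m)^T *m A *m (delta_mx j 0 : 'cV[R]_m)) 0 0 = A i j.
Proof. by rewrite trmx_delta -rowE -colE !mxE. Qed.

Lemma qf_delta (m : nat) (A : 'M[R]_m) i : qf A (delta_mx i 0) = A i i.
Proof. exact: bilin_delta. Qed.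

Lemma sum_mul_delta (m : nat) (F : 'I_m -> R) i :
  \sum_j F j * (delta_mx i 0 : 'cV[R]_m) j 0 = F i.
Proof.
rewrite (bigD1 i) //= big1 => [|j /negbTE ji]; first by rewrite !mxE !eqxx mulr1 addr0.
by rewrite !mxE ji mulr0.
Qed.

Lemma psd_offdiag_le (m : nat) (A : 'M[R]_m) i j :
  psd A -> A i j + A j i <= A i i + A j j.
Proof.
move=> [_ qA]; have := qA ((delta_mx i 0 : 'cV[R]_m) - delta_mx j 0).
have sub (P Q : 'M[R]_1) : (P - Q) 0 0 = P 0 0 - Q 0 0 by rewrite !mxE.
rewrite !linearB /= !mulmxBl !sub !bilin_delta.
lra.
Qed.

Lemma innerJ_le_mul_tr (m : nat) (A : 'M[R]_m) :
  psd A -> innerJ A <= m%:R * \tr A.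
Proof.
move=> psdA; suff : 2 * innerJ A <= 2 * (m%:R * \tr A) by lra.
have -> : 2 * innerJ A = \sum_i \sum_j (A i j + A j i).
  rewrite /innerJ; under [RHS]eq_bigr => i _ do rewrite big_split /=.
  by rewrite big_split /= [X in _ + X]exchange_big /= mulr2n mulrDl !mul1r.
have -> : 2 * (m%:R * \tr A) = \sum_i \sum_j (A i i + A j j).
  under [RHS]eq_bigr => i _ do rewrite big_split /= sumr_const card_ord -/(\tr A).
  by rewrite big_split /= sumr_const card_ord sumrMnl !mulr_natl mulr2n.
by apply: ler_sum => i _; apply: ler_sum => j _; exact: psd_offdiag_le.
Qed.

Lemma qf_arrow (m : nat) (a : R) (Z B : 'M[R]_m) (t : R) (x : 'cV[R]_m) :
  qf (arrow_mx a Z B) (col_mx t%:M x) =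
  a * t ^+ 2 + 2 * t * \sum_i Z i i * x i 0 + qf B x.
Proof.
have dx : ((diagv Z)^T *m x) 0 0 = \sum_i Z i i * x i 0.
  by rewrite mxE; apply: eq_bigr => i _; rewrite !mxE.
have xd : (x^T *m diagv Z) 0 0 = \sum_i Z i i * x i 0.
  by rewrite mxE; apply: eq_bigr => i _; rewrite !mxE mulrC.
rewrite /qf /arrow_mx tr_col_mx mul_row_block mul_row_col tr_scalar_mx.
rewrite !mul_scalar_mx mulmxDl -!scalemxAl !mul_mx_scalar mulmxDl -scalemxAl.
have addE (P Q : 'M[R]_1) : (P + Q) 0 0 = P 0 0 + Q 0 0 by rewrite mxE.
have scaleE c (P : 'M[R]_1) : (c *: P) 0 0 = c * P 0 0 by rewrite mxE.
by rewrite !addE !scaleE xd dx mxE /= mulr1n; ring.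
Qed.

Lemma psd_arrowP (m : nat) (a : R) (Z B : 'M[R]_m) :
  psd (arrow_mx a Z B) <->
  symm B /\ forall t (x : 'cV[R]_m), 0 <= a * t ^+ 2 + 2 * t * \sum_i Z i i * x i 0 + qf B x.
Proof.
split=> [[sA qA]|[sB qB]].
  split=> [|t x]; last by rewrite -qf_arrow; exact: qA.
  by move: sA; rewrite /symm /arrow_mx tr_block_mx trmxK => /eq_block_mx[].
split; first by rewrite /symm /arrow_mx tr_block_mx tr_scalar_mx trmxK sB.
by move=> y; rewrite -[y]vsubmxK [usubmx y]mx11_scalar -/(qf _ _) qf_arrow.
Qed.

End QuadraticForms.

Section Suprema.
Variable R : realType.

Lemma sup_eq_ub (S : set R) (v : R) :
  (exists2 x, S x & v <= x) -> ubound S v -> sup S = v.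
Proof.
move=> [x Sx le_vx] ubv; apply/le_anti/andP; split.
  by apply: ge_sup => //; exists x.
by apply: (le_trans le_vx); apply: ub_le_sup => //; exists v.
Qed.

Lemma sup_eq0 (S : set R) : (forall x, S x -> x = 0) -> sup S = 0.
Proof.
move=> S0; have [->|/set0P[x Sx]] := eqVneq S set0; first exact: sup0.
apply: sup_eq_ub => [|y /S0 ->//]; exists x => //.
by rewrite (S0 x Sx).
Qed.

End Suprema.

Definition proper_on (n p : nat) (E : rel 'I_n) (S : {set 'I_n}) (c : 'I_n -> 'I_p) :=
  forall i j, i \in S -> j \in S -> E i j -> c i != c j.

Lemma zero_on_edgesZ (R : realType) (n : nat) (E : rel 'I_n) (a : R) (A : 'M[R]_n) :
  zero_on_edges E A -> zero_on_edges E (a *: A).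
Proof. by move=> zA i j Eij; rewrite mxE zA ?mulr0. Qed.

Section ColourClasses.
Variables (R : realType) (n p : nat) (S : {set 'I_n}) (c : 'I_n -> 'I_p).

Definition class_mx : 'M[R]_(n, p) := \matrix_(i, j) ((i \in S) && (c i == j))%:R.

Definition colour_mx : 'M[R]_n :=
  \matrix_(i, j) ((i \in S) && (j \in S) && (c i == c j))%:R.

Lemma colour_mxE : colour_mx = class_mx *m class_mx^T.
Proof.
apply/matrixP => i j; rewrite !mxE (bigD1 (c i)) //= big1 => [|l /negbTE ne_l].
  by rewrite addr0 !mxE eqxx andbT -natrM mulnb andbA eq_sym.
by rewrite !mxE eq_sym ne_l andbF mul0r.
Qed.

Lemma psd_colour_mx : psd colour_mx.
Proof. by rewrite colour_mxE; exact: psd_mul_tr. Qed.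

Lemma symm_colour_mx : symm colour_mx.
Proof. exact: psd_colour_mx.1. Qed.

Lemma colour_mx_diag i : colour_mx i i = (i \in S)%:R.
Proof. by rewrite mxE eqxx andbT andbb. Qed.

Lemma tr_colour_mx : \tr colour_mx = #|S|%:R.
Proof.
have -> : (#|S|%:R : R) = \sum_(i in S) 1 by rewrite sumr_const.
by rewrite big_mkcond; apply: eq_bigr => i _; rewrite colour_mx_diag; case: (i \in S).
Qed.

Lemma nonneg_colour_mx : nonneg_mx colour_mx.
Proof. by move=> i j; rewrite mxE ler0n. Qed.

Lemma colour_mx_zero_on_edges (E : rel 'I_n) :
  proper_on E S c -> zero_on_edges E colour_mx.
Proof.
move=> properc i j Eij; rewrite mxE.
case: (boolP (i \in S)) => //= iS; case: (boolP (j \in S)) => //= jS.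
by rewrite (negbTE (properc i j iS jS Eij)).
Qed.

Lemma sum_diag_colour_mx (x : 'cV[R]_n) :
  \sum_i colour_mx i i * x i 0 = \sum_(i in S) x i 0.
Proof.
rewrite [RHS]big_mkcond; apply: eq_bigr => i _.
by rewrite colour_mx_diag; case: (i \in S); rewrite ?mul1r ?mul0r.
Qed.

Lemma sum_colour_classes (F : 'I_n -> R) :
  \sum_j \sum_(i in S | c i == j) F i = \sum_(i in S) F i.
Proof. by rewrite [RHS](partition_big c predT). Qed.

Lemma qf_colour_mx (x : 'cV[R]_n) :
  qf colour_mx x = \sum_j (\sum_(i in S | c i == j) x i 0) ^+ 2.
Proof.
rewrite colour_mxE qf_mul_tr; apply: eq_bigr => j _; congr (_ ^+ 2).
rewrite [RHS]big_mkcond; apply: eq_bigr => i _.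
by rewrite mxE; case: (_ && _); rewrite ?mul1r ?mul0r.
Qed.

Lemma sqr_sum_le_qf_colour_mx (x : 'cV[R]_n) :
  (\sum_(i in S) x i 0) ^+ 2 <= p%:R * qf colour_mx x.
Proof.
rewrite qf_colour_mx -sum_colour_classes.
by have := sqr_sum_le predT (fun j => \sum_(i in S | c i == j) x i 0); rewrite cardT size_enum_ord.
Qed.

Lemma sqr_card_le_innerJ : #|S|%:R ^+ 2 <= p%:R * innerJ colour_mx.
Proof.
rewrite innerJ_qf; have := sqr_sum_le_qf_colour_mx (const_mx 1).
by under eq_bigr do rewrite mxE; rewrite sumr_const.
Qed.

Lemma qf_colour_mx_le (a : nat) (x : 'cV[R]_n) :
  (forall j, #|[set i in S | c i == j]| <= a)%N ->
  qf colour_mx x <= a%:R * \sum_i x i 0 ^+ 2.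
Proof.
move=> small_classes; rewrite qf_colour_mx.
apply: (@le_trans _ _ (a%:R * \sum_j \sum_(i in S | c i == j) x i 0 ^+ 2)).
  rewrite mulr_sumr; apply: ler_sum => j _.
  apply: le_trans (sqr_sum_le _ _) _; apply: ler_wpM2r.
    by apply: sumr_ge0 => i _; exact: sqr_ge0.
  by rewrite ler_nat; move: (small_classes j); rewrite cardsE.
rewrite sum_colour_classes ler_wpM2l // [leRHS](bigID (mem S)) /= lerDl.
by apply: sumr_ge0 => i _; exact: sqr_ge0.
Qed.

Lemma psd_one_sub_colour_mx (a : nat) :
  (0 < a)%N -> (forall j, #|[set i in S | c i == j]| <= a)%N ->
  psd (1%:M - a%:R^-1 *: colour_mx).
Proof.
move=> a_gt0 small_classes.
split; first by rewrite /symm linearB /= tr_scalar_mx (symmZ _ symm_colour_mx).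
move=> x; rewrite -/(qf _ x) qfB qf1 qfZ subr_ge0 ler_pdivrMl ?ltr0n //.
exact: qf_colour_mx_le.
Qed.

End ColourClasses.

Definition ones_on (R : realType) (n : nat) (S : {set 'I_n}) : 'M[R]_n :=
  colour_mx R S (fun=> ord0 : 'I_1).

Lemma qf_ones_on (R : realType) (n : nat) (S : {set 'I_n}) (x : 'cV[R]_n) :
  qf (ones_on R S) x = (\sum_(i in S) x i 0) ^+ 2.
Proof.
rewrite qf_colour_mx big_ord1; congr (_ ^+ 2).
by apply: eq_bigl => i; rewrite eqxx andbT.
Qed.

Lemma ord_le1_eq (k : nat) (a b : 'I_k) : (k <= 1)%N -> a = b.
Proof. by move=> k_le1; apply: val_inj => /=; have := ltn_ord a; have := ltn_ord b; lia. Qed.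

Section SameAndDifferentColour.
Variables (R : realType) (n k : nat) (S : {set 'I_n}) (c : 'I_n -> 'I_k).

Local Notation Z := (colour_mx R S c).
Local Notation U := (ones_on R S).

(* For k <= 1 the factor is the junk value 0^-1 = 0, which is harmless:
   then all of S has a single colour and U = Z. *)
Definition other_mx : 'M[R]_n := (k.-1)%:R^-1 *: (U - Z).

Lemma colour_add_other_mx : Z + (k.-1)%:R *: other_mx = U.
Proof.
rewrite /other_mx scalerA; have [k_le1|k_gt1] := leqP k 1.
  have -> : (k.-1)%:R = 0 :> R by case: k c k_le1 => [|[|]].
  rewrite mul0r scale0r addr0; apply/matrixP => i j.
  by rewrite !mxE (ord_le1_eq (c i) (c j) k_le1) eqxx.
rewrite mulfV; last by rewrite pnatr_eq0; lia.
by rewrite scale1r addrC subrK.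
Qed.

Lemma other_mx_diag i : other_mx i i = 0.
Proof. by rewrite !mxE !eqxx subrr mulr0. Qed.

Lemma nonneg_other_mx : nonneg_mx other_mx.
Proof.
move=> i j; rewrite !mxE eqxx andbT; apply: mulr_ge0; first by rewrite invr_ge0.
by case: (_ && _); case: (c i == c j); rewrite /= ?subrr ?subr0.
Qed.

Lemma symm_other_mx : symm other_mx.
Proof. by apply: symmZ; rewrite /symm linearB /= !symm_colour_mx. Qed.

Lemma psd_colour_sub_other_mx (k_gt0 : (0 < k)%N) : psd (Z - other_mx).
Proof.
have [sZ qZ] := psd_colour_mx R S c.
split; first by rewrite /symm linearB /= sZ symm_other_mx.
move=> x; rewrite -/(qf _ x) qfB /other_mx qfZ qfB qf_ones_on.
set r := (k.-1)%:R^-1 : R; set Q := qf Z x; set V := (\sum_(i in S) x i 0) ^+ 2.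
have Q_ge0 : 0 <= Q by exact: qZ.
have V_le : V <= k%:R * Q by exact: sqr_sum_le_qf_colour_mx.
have r_ge0 : 0 <= r by rewrite invr_ge0.
have r_le : r * (k.-1)%:R <= 1.
  by have [->|nz] := eqVneq ((k.-1)%:R : R) 0; rewrite ?mulr0 ?ler01 ?mulVf.
have -> : Q - r * (V - Q) = r * (k%:R * Q - V) + (1 - r * (k.-1)%:R) * Q.
  by rewrite -[k in k%:R](prednK k_gt0) -natr1; ring.
by apply: addr_ge0; apply: mulr_ge0; rewrite ?subr_ge0.
Qed.

Lemma psd_arrow_colour_ones : psd (arrow_mx 1 Z U).
Proof.
apply/psd_arrowP; split; first exact: symm_colour_mx.
move=> t x; rewrite sum_diag_colour_mx qf_ones_on.
have := sqr_ge0 (t + \sum_(i in S) x i 0); rewrite sqrrD; lra.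
Qed.

Lemma feas2_colour_mx (E : rel 'I_n) :
  (0 < k)%N -> proper_on E S c -> feas2 k E Z other_mx.
Proof.
move=> k_gt0 properc; split.
- by split; [exact: symm_colour_mx | exact: symm_other_mx].
- exact: colour_mx_zero_on_edges.
- exact: other_mx_diag.
- by split; [exact: nonneg_colour_mx | exact: nonneg_other_mx].
- split; first exact: psd_colour_sub_other_mx.
  by rewrite colour_add_other_mx; exact: psd_arrow_colour_ones.
Qed.

Lemma lin_ineq_colour_mx : lin_ineq k Z other_mx.
Proof.
have same_set i j : Z i j + (k.-1)%:R * other_mx i j = ((i \in S) && (j \in S))%:R.
  have addE (A B : 'M[R]_n) l m : (A + B) l m = A l m + B l m by rewrite mxE.
  have scaleE a (A : 'M[R]_n) l m : (a *: A) l m = a * A l m by rewrite mxE.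
  by rewrite -scaleE -addE colour_add_other_mx mxE eqxx andbT.
split=> i j _.
  rewrite -addrA same_set !colour_mx_diag.
  by case: (i \in S); case: (j \in S); rewrite /=; lra.
rewrite -addrA -opprD same_set colour_mx_diag.
by case: (i \in S); case: (j \in S); rewrite /=; lra.
Qed.

End SameAndDifferentColour.

Section ThetaBounds.
Variables (R : realType) (n : nat) (E : rel 'I_n).

Lemma innerJ_le_theta (Z : 'M[R]_n) :
  symm Z -> zero_on_edges E Z -> \tr Z = 1 -> psd Z -> innerJ Z <= theta R E.
Proof.
move=> sZ zZ trZ pZ; apply: ub_le_sup; last by exists Z.
exists n%:R => _ [W [_ _ trW psdW] <-].
by have := innerJ_le_mul_tr psdW; rewrite trW mulr1.
Qed.

Lemma innerJ_le_tr_theta (Z : 'M[R]_n) :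
  symm Z -> zero_on_edges E Z -> psd Z -> 0 < \tr Z -> innerJ Z <= \tr Z * theta R E.
Proof.
move=> sZ zZ pZ tr_gt0; rewrite -ler_pdivrMl // -innerJZ.
apply: innerJ_le_theta.
- exact: symmZ.
- exact: zero_on_edgesZ.
- by rewrite mxtraceZ mulVf ?gt_eqF.
- by apply: psdZ pZ; rewrite invr_ge0 ltW.
Qed.

Lemma card_stable_le_theta (S : {set 'I_n}) :
  stable E S -> (0 < #|S|)%N -> #|S|%:R <= theta R E.
Proof.
move=> stS; rewrite -(ltr0n R) => S_gt0.
have properS : proper_on E S (fun=> ord0 : 'I_1).
  move=> i j iS jS Eij; move/forallP/(_ i)/implyP/(_ iS)/forallP/(_ j)/implyP/(_ jS): stS.
  by rewrite Eij.
have := innerJ_le_tr_theta (symm_colour_mx _ _ _)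
  (colour_mx_zero_on_edges R properS) (psd_colour_mx R S (fun=> ord0 : 'I_1)).
rewrite tr_colour_mx => /(_ S_gt0) J_le.
rewrite -(ler_pM2l S_gt0); apply: le_trans J_le.
by have := sqr_card_le_innerJ R S (fun=> ord0 : 'I_1); rewrite mul1r expr2.
Qed.

Lemma tr_le_k_theta (k : nat) (Z : 'M[R]_n) :
  (0 < k)%N -> 0 <= theta R E -> zero_on_edges E Z ->
  psd (arrow_mx k%:R Z Z) -> \tr Z <= k%:R * theta R E.
Proof.
move=> k_gt0 theta_ge0 zZ /psd_arrowP[sZ arrow_ge0].
have k_pos : 0 < (k%:R : R) by rewrite ltr0n.
have pZ : psd Z.
  by split=> // x; have := arrow_ge0 0 x; rewrite expr2 !(mulr0, mul0r, add0r).
set s := \tr Z; have [s_le0|s_gt0] := lerP s 0.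
  by apply: le_trans s_le0 _; apply: mulr_ge0 => //; exact: ltW.
set u := s / k%:R; have ku : k%:R * u = s by rewrite mulrC divfK ?gt_eqF.
(* The arrow form at (-s/k, 1) is <J, Z> - s^2/k. *)
have := arrow_ge0 (- u) (const_mx 1).
have -> : \sum_i Z i i * (const_mx 1 : 'cV[R]_n) i 0 = s.
  by rewrite /s /mxtrace; apply: eq_bigr => i _; rewrite mxE mulr1.
rewrite -innerJ_qf => arrow1.
have us_le : u * s <= innerJ Z.
  by move: arrow1; rewrite sqrrN expr2 mulrA ku; lra.
have := le_trans us_le (innerJ_le_tr_theta sZ zZ pZ s_gt0).
by rewrite mulrC ler_pM2l // -ku ler_pM2l.
Qed.

Lemma feas2_theta3_constraints (k : nat) (Z X : 'M[R]_n) :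
  (0 < k)%N -> feas2 k E Z X ->
  [/\ symm Z, zero_on_edges E Z, (forall i, Z i i <= 1), nonneg_mx Z
    & psd (arrow_mx k%:R Z Z)].
Proof.
move=> k_gt0 [[sZ sX] zZ X_diag [nZ nX] [[_ qZX] /psd_arrowP[_ arrow_ge0]]].
set c := (k.-1)%:R : R; have kc : (k%:R : R) = c + 1 by rewrite /c natr1 prednK.
have c_ge0 : 0 <= c by rewrite ler0n.
split => // [i|].
  (* The arrow form at (-Z_ii, e_i) is Z_ii - Z_ii^2, as X_ii = 0. *)
  have := arrow_ge0 (- Z i i) (delta_mx i 0).
  rewrite sum_mul_delta qfD qfZ !qf_delta X_diag mulr0 addr0.
  by have := nZ i i; nra.
apply/psd_arrowP; split=> // t x.
have ZX_ge0 : 0 <= qf Z x - qf X x by rewrite -qfB; exact: qZX.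
have := arrow_ge0 (k%:R * t) x; rewrite qfD qfZ => arrow_kt_ge0.
have k_pos : 0 < (k%:R : R) by rewrite ltr0n.
(* k times the form is the arrow form at (k t, x) plus (k - 1) qf (Z - X) x. *)
rewrite -(pmulr_rge0 _ k_pos).
have -> : k%:R * (k%:R * t ^+ 2 + 2 * t * \sum_i Z i i * x i 0 + qf Z x) =
  (1 * (k%:R * t) ^+ 2 + 2 * (k%:R * t) * \sum_i Z i i * x i 0 + (qf Z x + c * qf X x))
  + c * (qf Z x - qf X x) by rewrite kc; ring.
by apply: addr_ge0 => //; exact: mulr_ge0.
Qed.

End ThetaBounds.

Section StableSets.
Variables (n : nat) (E : rel 'I_n).

Lemma stable_colour_class (p : nat) (S : {set 'I_n}) (c : 'I_n -> 'I_p) j :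
  proper_on E S c -> stable E [set i in S | c i == j].
Proof.
move=> properc; apply/forallP => i; apply/implyP; rewrite inE => /andP[iS /eqP ci].
apply/forallP => l; apply/implyP; rewrite inE => /andP[lS /eqP cl].
by apply/negP => Eil; move: (properc i l iS lS Eil); rewrite ci cl eqxx.
Qed.

Lemma card_le_alpha (S : {set 'I_n}) : stable E S -> (#|S| <= alpha E)%N.
Proof. exact: leq_bigmax_cond. Qed.

Lemma alpha_witness : exists2 S : {set 'I_n}, stable E S & #|S| = alpha E.
Proof.
have [|S stS max_S] := @eq_bigmax_cond _ (stable E) (fun S => #|S|).
  by apply/card_gt0P; exists finset.set0; apply/forallP => i; rewrite inE.
by exists S; rewrite // -max_S.
Qed.

Lemma alpha_gt0 : irreflexive E -> (0 < n)%N -> (0 < alpha E)%N.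
Proof.
move=> E_irr n_gt0; pose i0 := Ordinal n_gt0.
have stable1 : stable E [set i0].
  apply/forallP => i; apply/implyP => /set1P->.
  by apply/forallP => j; apply/implyP => /set1P->; rewrite E_irr.
by have := card_le_alpha stable1; rewrite cards1.
Qed.

Lemma alpha_k_witness (k : nat) : (0 < k)%N ->
  exists S (c : 'I_n -> 'I_k), proper_on E S c /\ #|S| = alpha_k k E.
Proof.
move=> k_gt0.
have [|S /asboolP[c properc] max_S] :=
  @eq_bigmax_cond _ (fun S => `[< k_colorable_set k E S >]) (fun S => #|S|).
  apply/card_gt0P; exists finset.set0; apply/asboolP.
  by exists (fun=> Ordinal k_gt0) => i; rewrite inE.
by exists S, c; rewrite -max_S.
Qed.

Lemma card_colour_classes (p : nat) (S : {set 'I_n}) (c : 'I_n -> 'I_p) :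
  #|S| = (\sum_j #|[set i in S | c i == j]|)%N.
Proof.
rewrite -sum1_card (partition_big c predT) //=; apply: eq_bigr => j _.
by rewrite sum1dep_card cardsE.
Qed.

Lemma alpha_k_le (k : nat) : (alpha_k k E <= k * alpha E)%N.
Proof.
apply/bigmax_leqP => S /asboolP[c properc].
rewrite (card_colour_classes S c) -[k in (k * _)%N]card_ord -sum_nat_const.
by apply: leq_sum => j _; apply/card_le_alpha/stable_colour_class.
Qed.

End StableSets.

Lemma cards_ord0 (S : {set 'I_0}) : #|S| = 0%N.
Proof. by apply/eqP; rewrite -leqn0 (leq_trans (max_card _)) ?card_ord. Qed.

Lemma alpha_ord0 (E : rel 'I_0) : alpha E = 0%N.
Proof. by apply: big1 => S _; exact: cards_ord0. Qed.

Lemma alpha_k_ord0 (k : nat) (E : rel 'I_0) : alpha_k k E = 0%N.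
Proof. by apply: big1 => S _; exact: cards_ord0. Qed.

Section Sandwich.
Variables (R : realType) (n k : nat) (E : rel 'I_n).
Hypotheses (E_irr : irreflexive E) (n_gt0 : (0 < n)%N) (k_gt0 : (0 < k)%N).
Hypothesis alpha_k_theta : (alpha_k k E)%:R = k%:R * theta R E.

Local Notation ak := ((alpha_k k E)%:R : R).

Lemma alpha_le_theta : (alpha E)%:R <= theta R E.
Proof.
have [S stS cardS] := alpha_witness E; rewrite -cardS.
by apply: card_stable_le_theta stS _; rewrite cardS alpha_gt0.
Qed.

Lemma alpha_k_eq_k_alpha : alpha_k k E = (k * alpha E)%N.
Proof.
apply/eqP; rewrite eqn_leq alpha_k_le /= -(ler_nat R) natrM alpha_k_theta.
by rewrite ler_wpM2l ?ler0n ?alpha_le_theta.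
Qed.

Lemma innerJ_le_alpha_k (Z : 'M[R]_n) :
  symm Z -> zero_on_edges E Z -> \tr Z = k%:R -> psd Z -> innerJ Z <= ak.
Proof.
by move=> sZ zZ trZ pZ; rewrite alpha_k_theta -trZ innerJ_le_tr_theta // trZ ltr0n.
Qed.

Lemma tr_le_alpha_k (Z : 'M[R]_n) :
  zero_on_edges E Z -> psd (arrow_mx k%:R Z Z) -> \tr Z <= ak.
Proof.
move=> zZ pZ; rewrite alpha_k_theta tr_le_k_theta //.
exact: le_trans (ler0n _ _) alpha_le_theta.
Qed.

Lemma theta'_k_witness : exists2 Z : 'M[R]_n,
    [/\ symm Z, zero_on_edges E Z, \tr Z = k%:R, psd Z /\ psd (1%:M - Z) & nonneg_mx Z]
  & ak <= innerJ Z.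
Proof.
have [S [c [properc cardS]]] := alpha_k_witness E k_gt0.
have a_gt0 := alpha_gt0 E_irr n_gt0.
have a_pos : 0 < (alpha E)%:R :> R by rewrite ltr0n.
exists ((alpha E)%:R^-1 *: colour_mx R S c); first split.
- exact/symmZ/symm_colour_mx.
- exact/zero_on_edgesZ/colour_mx_zero_on_edges.
- by rewrite mxtraceZ tr_colour_mx cardS alpha_k_eq_k_alpha natrM mulrCA mulVf ?mulr1 ?gt_eqF.
- split; first by apply: psdZ (psd_colour_mx _ _ _); rewrite invr_ge0 ltW.
  apply: psd_one_sub_colour_mx => // j.
  exact/card_le_alpha/(stable_colour_class _ properc).
- by move=> i j; rewrite mxE mulr_ge0 ?invr_ge0 ?ler0n ?nonneg_colour_mx.
rewrite innerJZ ler_pdivlMl // alpha_k_eq_k_alpha natrM.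
have := sqr_card_le_innerJ R S c.
by rewrite cardS alpha_k_eq_k_alpha natrM expr2 -mulrA ler_pM2l ?ltr0n.
Qed.

Lemma theta1_witness : exists2 Z : 'M[R]_n,
  exists X, feas2 k E Z X /\ lin_ineq k Z X & \tr Z = ak.
Proof.
have [S [c [properc cardS]]] := alpha_k_witness E k_gt0.
exists (colour_mx R S c); last by rewrite tr_colour_mx cardS.
by exists (other_mx R S c); split; [exact: feas2_colour_mx | exact: lin_ineq_colour_mx].
Qed.

Lemma theta_k_eq_alpha_k : theta_k R k E = ak.
Proof.
apply: sup_eq_ub => [|_ [Z [sZ zZ trZ pZ _] <-]]; last exact: innerJ_le_alpha_k.
have [Z [sZ zZ trZ [pZ pIZ] _] JZ] := theta'_k_witness.
by exists (innerJ Z) => //; exists Z.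
Qed.

Lemma theta'_k_eq_alpha_k : theta'_k R k E = ak.
Proof.
apply: sup_eq_ub => [|_ [Z [sZ zZ trZ [pZ _] _] <-]]; last exact: innerJ_le_alpha_k.
have [Z feasZ JZ] := theta'_k_witness.
by exists (innerJ Z) => //; exists Z.
Qed.

Lemma theta1_k_eq_alpha_k : theta1_k R k E = ak.
Proof.
apply: sup_eq_ub => [|_ [Z [X [feasZX _]] <-]].
  by have [Z feasZ trZ] := theta1_witness; exists (\tr Z); [exists Z | rewrite trZ].
by have [_ zZ _ _ pZ] := feas2_theta3_constraints k_gt0 feasZX; exact: tr_le_alpha_k.
Qed.

Lemma theta2_k_eq_alpha_k : theta2_k R k E = ak.
Proof.
apply: sup_eq_ub => [|_ [Z [X feasZX] <-]].
  have [Z [X [feasZX _]] trZ] := theta1_witness.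
  by exists (\tr Z); [exists Z => //; exists X | rewrite trZ].
by have [_ zZ _ _ pZ] := feas2_theta3_constraints k_gt0 feasZX; exact: tr_le_alpha_k.
Qed.

Lemma theta3_k_eq_alpha_k : theta3_k R k E = ak.
Proof.
apply: sup_eq_ub => [|_ [Z [_ zZ _ _ pZ] <-]]; last exact: tr_le_alpha_k.
have [Z [X [feasZX _]] trZ] := theta1_witness.
by exists (\tr Z); [exists Z => //; exact: feas2_theta3_constraints feasZX | rewrite trZ].
Qed.

End Sandwich.

(* Without vertices no matrix has trace k > 0: theta_k and theta'_k are then
   suprema of the empty set, which [sup] sets to 0. *)
Section EmptyGraph.
Local Open Scope classical_set_scope.

Lemma sup_innerJ_ord0 (R : realType) (k : nat) (P : set 'M[R]_0) :
  (0 < k)%N -> (forall Z, P Z -> \tr Z = k%:R) -> sup [set innerJ Z | Z in P] = 0.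
Proof.
move=> k_gt0 trP; apply: sup_eq0 => x [Z /trP trZ _].
have : (k%:R : R) != 0 by rewrite pnatr_eq0 -lt0n.
by rewrite -trZ /mxtrace big_ord0 eqxx.
Qed.

Lemma sup_tr_ord0 (R : realType) (P : set 'M[R]_0) : sup [set \tr Z | Z in P] = 0.
Proof. by apply: sup_eq0 => x [Z _ <-]; rewrite /mxtrace big_ord0. Qed.

End EmptyGraph.

Theorem lemma5 (R : realType) (n : nat) (E : rel 'I_n) (k : nat) :
  simple_graph E -> (1 <= k)%N ->
  (alpha_k k E)%:R = k%:R * theta R E ->
  theta_k R k E = theta'_k R k E /\
  theta'_k R k E = theta1_k R k E /\
  theta1_k R k E = theta2_k R k E /\
  theta2_k R k E = theta3_k R k E /\
  theta3_k R k E = (k * alpha E)%:R /\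
  (k * alpha E)%:R = (alpha_k k E)%:R :> R.
Proof.
move=> [_ E_irr] k_gt0 alpha_k_theta.
case: n E E_irr alpha_k_theta => [|n] E E_irr alpha_k_theta.
  rewrite alpha_ord0 alpha_k_ord0 muln0 /theta_k /theta'_k /theta1_k /theta2_k /theta3_k.
  by rewrite !sup_tr_ord0 !(sup_innerJ_ord0 k_gt0) // => Z [].
rewrite theta_k_eq_alpha_k // theta'_k_eq_alpha_k // theta1_k_eq_alpha_k //.
rewrite theta2_k_eq_alpha_k // theta3_k_eq_alpha_k //.
by rewrite (alpha_k_eq_k_alpha E_irr _ alpha_k_theta).
Qed.
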